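(* Let $K\subseteq\mathbb{R}$ be a field that is an algebraic extension of $\mathbb{Q}$, and let $K^+=\{x\in K:x>0\}$. Then $K^+$ cannot be written as $H_1\sqcup H_2$ with $H_1,H_2$ disjoint nonempty subsets, each closed under addition and multiplication. *)

From HB Require Import structures.
From mathcomp Require Import all_boot all_order all_algebra.
From mathcomp Require Import reals.
Set Implicit Arguments. Unset Strict Implicit. Unset Printing Implicit Defensive.
Import Order.TTheory GRing.Theory Num.Theory.
Local Open Scope ring_scope.

Definition is_subfield (R : realType) (K : R -> Prop) : Prop :=
  K 0 /\ K 1 /\
  (forall x y, K x -> K y -> K (x + y)) /\
  (forall x, K x -> K (- x)) /\
  (forall x y, K x -> K y -> K (x * y)) /\
  (forall x, K x -> x != 0 -> K x^-1).

Definition algebraic_over_Q (R : realType) (x : R) : Prop :=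
  exists p : {poly rat}, p != 0 /\ root (map_poly ratr p) x.

Definition pos_part (R : realType) (K : R -> Prop) (x : R) : Prop := K x /\ 0 < x.

Definition semiring_closed_set (R : realType) (H : R -> Prop) : Prop :=
  (forall x y, H x -> H y -> H (x + y)) /\ (forall x y, H x -> H y -> H (x * y)).

(* Swapping H1 and H2 if necessary, 1 lies in H1; then every positive rational lies in
   H1, and both classes are stable under multiplication by positive rationals.
   If some h in H2 has 1 + h in H1, the set of such h is closed under sums, products and
   positive rational multiples.  Splitting a relation c0 + c1 h + ... + cn h^n = 0 with
   rational ci and c0 <> 0 according to the signs of the ci gives s1 + |c0| = s2 with
   s1, s2 in that set or zero; but then s2 lies in H2 and s1 + |c0| in H1.
   Otherwise H2 + 1 is contained in H2, so membership in H1 or H2 is invariant under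
   rational translations, and the two classes extend modulo Q to a partition of K.
   Fix x in H2.  Multiplying rational approximations of x and of its powers shows, by
   induction on monomials, that f(x) - g x lies in the H2-class for every rational
   polynomial f and rational g < f'(x).  Taking g = 0 and f with f(x) = 0 < f'(x)
   (some rational polynomial or its opposite) puts the rational 0 in the H2-class. *)

From HB Require Import structures.
From mathcomp Require Import all_boot all_order all_algebra.
From mathcomp Require Import reals.
From mathcomp Require Import ring lra.
From Stdlib Require Import Classical.
Set Implicit Arguments. Unset Strict Implicit. Unset Printing Implicit Defensive.
Import Order.TTheory GRing.Theory Num.Theory.
Local Open Scope ring_scope.

Lemma ratr_pos_natdiv (R : numFieldType) (q : rat) : 0 < q ->
  exists m n : nat, ratr q = m.+1%:R / n.+1%:R :> R.
Proof.
rewrite -numq_gt0 /ratr; move: (denq_gt0 q).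
by case: (numq q) => [[|m]|m] //; case: (denq q) => [[|n]|n] // _ _; exists m, n.
Qed.

Lemma rat_between (R : archiRealFieldType) (x y : R) :
  x < y -> exists2 q : rat, x < ratr q & ratr q < y.
Proof. by move=> /rat_in_itvoo [q]; rewrite in_itv /= => /andP[]; exists q. Qed.

Lemma addr_closed_natmul (V : nmodType) (P : V -> Prop) :
  (forall x y, P x -> P y -> P (x + y)) -> forall x n, P x -> P (x *+ n.+1).
Proof. by move=> PD x n Px; elim: n => [|n IH]; rewrite ?mulr1n // mulrS; apply: PD. Qed.

Lemma mulr_closed_exp (R : pzSemiRingType) (P : R -> Prop) :
  (forall x y, P x -> P y -> P (x * y)) -> forall x n, P x -> P (x ^+ n.+1).
Proof. by move=> PM x n Px; elim: n => [|n IH]; rewrite ?expr1 // exprS; apply: PM. Qed.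

Lemma rat_comb_split (R : numFieldType) (A : R -> Prop) :
  (forall x y, A x -> A y -> A (x + y)) ->
  (forall (q : rat) x, 0 < q -> A x -> A (ratr q * x)) ->
  forall (I : Type) (r : seq I) (c : I -> rat) (y : I -> R), (forall i, A (y i)) ->
  exists s1 s2, [/\ s1 = 0 \/ A s1, s2 = 0 \/ A s2 &
                    \sum_(i <- r) ratr (c i) * y i = s1 - s2].
Proof.
move=> AD AZ I r c y Ay; pose A0 s := s = 0 \/ A s.
have A0D s t : A0 s -> A0 t -> A0 (s + t).
  by case=> [->|As] [->|At]; rewrite ?add0r ?addr0; [left|right|right|right; apply: AD].
have A0Z q i : 0 <= q -> A0 (ratr q * y i).
  rewrite le_eqVlt => /predU1P[<-|q_gt0]; last by right; apply: AZ.
  by left; rewrite rmorph0 mul0r.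
exists (\sum_(i <- r | 0 <= c i) ratr (c i) * y i),
       (\sum_(i <- r | c i < 0) ratr (- c i) * y i).
split.
- by apply: (big_ind A0) => // [|i ci_ge0]; [left | exact: A0Z].
- by apply: (big_ind A0) => // [|i /ltW ci_le0]; [left | apply: A0Z; rewrite oppr_ge0].
rewrite (bigID (fun i => 0 <= c i)) /= -sumrN; congr (_ + _).
by apply: eq_big => [i|i _]; rewrite ?ltNge // rmorphN mulNr opprK.
Qed.

Lemma size_poly_deriv_eq0 (R : numDomainType) (p : {poly R}) :
  p^`() = 0 -> (size p <= 1)%N.
Proof.
move=> dp0; rewrite leqNgt; apply/negP => sp.
have : p^`()`_(size p).-2 = 0 by rewrite dp0 coef0.
rewrite coef_deriv (_ : (size p).-2.+1 = (size p).-1); last by case: (size p) sp => [|[|k]].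
rewrite -lead_coefE => /eqP; rewrite mulrn_eq0 lead_coef_eq0 -size_poly_eq0.
by case: (size p) sp => [|[|k]].
Qed.

Lemma rat_root_coef0_neq0 (R : numFieldType) (x : R) (p : {poly rat}) :
  x != 0 -> p != 0 -> root (map_poly ratr p) x ->
  exists q : {poly rat}, q`_0 != 0 /\ root (map_poly ratr q) x.
Proof.
move=> x_neq0 p_neq0; case: (multiplicity_XsubC p 0) => m [q].
rewrite p_neq0 /root horner_coef0 polyC0 subr0 => q0 ->.
rewrite rmorphM rmorphXn /= map_polyX hornerM hornerXn mulf_eq0 expf_eq0 (negPf x_neq0).
by rewrite andbF orbF; exists q.
Qed.

Lemma rat_root_deriv_neq0 (R : numFieldType) (x : R) (p : {poly rat}) :
  p != 0 -> root (map_poly ratr p) x ->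
  exists q : {poly rat}, root (map_poly ratr q) x /\ (map_poly ratr q^`()).[x] != 0.
Proof.
have [n] := ubnP (size p); elim: n => // n IH in p *; rewrite ltnS => sz p_neq0 rp.
have [dp0|] := eqVneq (map_poly ratr p^`()).[x] 0; last by exists p.
apply: (IH p^`()); [exact: leq_trans (lt_size_deriv p_neq0) sz | | exact/rootP].
move: rp; apply: contraTneq => /size_poly_deriv_eq0/size1_polyC pC.
by move: p_neq0; rewrite pC map_polyC /root hornerC polyC_eq0 fmorph_eq0.
Qed.

Section Subfield.
Variables (R : realType) (K : R -> Prop).
Hypothesis HK : is_subfield K.

Lemma subfield1 : K 1.
Proof. by case: HK => _ []. Qed.

Lemma subfieldD x y : K x -> K y -> K (x + y).
Proof. by case: HK => _ [_ [hD _]]; apply: hD. Qed.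

Lemma subfieldN x : K x -> K (- x).
Proof. by case: HK => _ [_ [_ [hN _]]]; apply: hN. Qed.

Lemma subfieldM x y : K x -> K y -> K (x * y).
Proof. by case: HK => _ [_ [_ [_ [hM _]]]]; apply: hM. Qed.

Lemma subfieldV x : K x -> x != 0 -> K x^-1.
Proof. by case: HK => _ [_ [_ [_ [_ hV]]]]; apply: hV. Qed.

Lemma subfieldB x y : K x -> K y -> K (x - y).
Proof. by move=> Kx Ky; apply/subfieldD/subfieldN. Qed.

Lemma subfieldX x n : K x -> K (x ^+ n).
Proof. by case: n => [|n] Kx; [exact: subfield1 | apply: mulr_closed_exp subfieldM _ _ Kx]. Qed.

Lemma subfield_int (z : int) : K z%:~R.
Proof.
have Kn n : K n%:R.
  by case: n => [|n]; [case: HK | apply: addr_closed_natmul subfieldD _ _ subfield1].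
by case: z => n; [exact: Kn | rewrite NegzE intrN; exact/subfieldN/Kn].
Qed.

Lemma subfield_rat (q : rat) : K (ratr q).
Proof. by apply: subfieldM (subfield_int _) (subfieldV (subfield_int _) _); rewrite intr_eq0. Qed.

End Subfield.

Definition semiring_partition (R : realType) (K A B : R -> Prop) : Prop :=
  [/\ forall x, A x -> B x -> False, forall x, pos_part K x <-> A x \/ B x,
      semiring_closed_set A & semiring_closed_set B].

Lemma semiring_partition_sym (R : realType) (K A B : R -> Prop) :
  semiring_partition K A B -> semiring_partition K B A.
Proof.
by case=> disj cover cA cB; split=> // x; [move=> /[swap]; exact: disj | rewrite cover; tauto].
Qed.

Section Partition.
Variables (R : realType) (K A B : R -> Prop).
Hypotheses (HK : is_subfield K) (hAB : semiring_partition K A B).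

Lemma part_pos x : A x -> K x /\ 0 < x.
Proof. by case: hAB => _ cover _ _ Ax; apply/cover; left. Qed.

Lemma part_disj x : A x -> B x -> False.
Proof. by case: hAB => disj _ _ _; apply: disj. Qed.

Lemma partD x y : A x -> A y -> A (x + y).
Proof. by case: hAB => _ _ [hD _] _; apply: hD. Qed.

Lemma partM x y : A x -> A y -> A (x * y).
Proof. by case: hAB => _ _ [_ hM] _; apply: hM. Qed.

Lemma part_classify x : K x -> 0 < x -> A x \/ B x.
Proof. by case: hAB => _ cover _ _ Kx x_gt0; apply/cover. Qed.

Lemma part_of_notB x : K x -> 0 < x -> (B x -> False) -> A x.
Proof. by move=> Kx x_gt0 nBx; case: (part_classify Kx x_gt0) => // /nBx. Qed.

Lemma part_divn x n : A x -> A (x / n.+1%:R).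
Proof.
move=> Ax; have [Kx x_gt0] := part_pos Ax.
have n1_neq0 : n.+1%:R != 0 :> R by rewrite pnatr_eq0.
apply: part_of_notB => [||Bxn].
- by apply: subfieldM (subfieldV HK _ n1_neq0) => //; exact: (subfield_int HK n.+1).
- by rewrite divr_gt0.
- case: hAB => _ _ _ [BD _]; apply: part_disj Ax _.
  by rewrite -(divfK n1_neq0 x) mulr_natr; apply: addr_closed_natmul BD _ _ Bxn.
Qed.

Lemma partZ x (q : rat) : A x -> 0 < q -> A (ratr q * x).
Proof.
move=> Ax /(ratr_pos_natdiv R) [m [n ->]].
by rewrite mulrAC mulr_natl; apply/part_divn/(addr_closed_natmul partD).
Qed.

Definition modQ w := K w /\ exists c : rat, A (w + ratr c).

Lemma modQ_of w : A w -> modQ w.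
Proof. by move=> Aw; split; [exact: (part_pos Aw).1 | exists 0; rewrite rmorph0 addr0]. Qed.

Lemma modQD u v : modQ u -> modQ v -> modQ (u + v).
Proof.
move=> [Ku [c Auc]] [Kv [d Avd]]; split; first exact: (subfieldD HK Ku Kv).
exists (c + d); rewrite rmorphD /=.
by rewrite (_ : u + v + _ = (u + ratr c) + (v + ratr d)); [apply: partD | ring].
Qed.

Lemma modQZ u (q : rat) : modQ u -> 0 < q -> modQ (ratr q * u).
Proof.
move=> [Ku [c Auc]] q_gt0; split; first exact: (subfieldM HK (subfield_rat HK q) Ku).
exists (q * c); rewrite rmorphM /= -mulrDr; exact: partZ.
Qed.

Lemma modQ_addr u (r : rat) : modQ u -> modQ (u + ratr r).
Proof.
move=> [Ku [c Auc]]; split; first exact: (subfieldD HK Ku (subfield_rat HK r)).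
by exists (c - r); rewrite rmorphB /= [ratr c - _]addrC addrA addrK.
Qed.

End Partition.

Section OneInH1.
Variables (R : realType) (K H1 H2 : R -> Prop).
Hypotheses (HK : is_subfield K) (hP : semiring_partition K H1 H2) (H1_1 : H1 1).
Hypothesis Halg : forall y, K y -> algebraic_over_Q y.
Let hP' := semiring_partition_sym hP.

Lemma H1_rat (q : rat) : 0 < q -> H1 (ratr q).
Proof. by move=> q_gt0; rewrite -[ratr q]mulr1; exact: (partZ HK hP H1_1 q_gt0). Qed.

Lemma H2_subr_rat h (q : rat) : H2 h -> 0 < q -> ratr q < h -> H2 (h - ratr q).
Proof.
move=> H2h q_gt0 qh; have [Kh _] := part_pos hP' H2h.
apply: (part_of_notB hP') => [||H1hq]; first exact: (subfieldB HK Kh (subfield_rat HK q)).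
  by rewrite subr_gt0.
by apply: (part_disj hP _ H2h); rewrite -(subrK (ratr q) h); apply: (partD hP H1hq (H1_rat q_gt0)).
Qed.

Lemma H1_rat_subr h (q : rat) : H2 h -> h < ratr q -> H1 (ratr q - h).
Proof.
move=> H2h hq; have [Kh h_gt0] := part_pos hP' H2h.
have q_gt0 : 0 < q by rewrite -(ltr0q R); lra.
apply: (part_of_notB hP) => [||H2qh]; first exact: (subfieldB HK (subfield_rat HK q) Kh).
  by rewrite subr_gt0.
by apply: (part_disj hP (H1_rat q_gt0)); rewrite -(subrK h (ratr q)); apply: (partD hP' H2qh H2h).
Qed.

Lemma H1_1addr h : H2 h -> (H2 (1 + h) -> False) -> H1 (1 + h).
Proof.
move=> H2h; have [Kh h_gt0] := part_pos hP' H2h.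
by apply: (part_of_notB hP); [exact: (subfieldD HK (subfield1 HK) Kh) | rewrite addr_gt0].
Qed.

Definition crossing s := H2 s /\ H1 (1 + s).

Lemma crossingD a b : crossing a -> crossing b -> crossing (a + b).
Proof.
move=> [H2a H1a] [H2b H1b]; have H2ab := partD hP' H2a H2b; split=> //.
apply: (H1_1addr H2ab) => H2ab1; apply: (part_disj hP (partM hP H1a H1b)).
rewrite (_ : _ * _ = (1 + (a + b)) + a * b); last by ring.
exact: (partD hP' H2ab1 (partM hP' H2a H2b)).
Qed.

Lemma crossingM a b : crossing a -> crossing b -> crossing (a * b).
Proof.
move=> [H2a H1a] [H2b H1b]; have H2ab := partM hP' H2a H2b; split=> //.
apply: (H1_1addr H2ab) => H2ab1; apply: (part_disj hP (partM hP H1a H1b)).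
rewrite (_ : _ * _ = (1 + a * b) + (a + b)); last by ring.
exact: (partD hP' H2ab1 (partD hP' H2a H2b)).
Qed.

Lemma crossing_divn a n : crossing a -> crossing (a / n.+1%:R).
Proof.
move=> [H2a H1a]; have H2an := part_divn HK hP' n H2a; split=> //.
apply: (H1_1addr H2an) => H2an1.
have H1an : H1 ((1 + a) + n%:R).
  case: n {H2an H2an1} => [|n]; first by rewrite addr0.
  exact: (partD hP H1a (addr_closed_natmul (partD hP) n H1_1)).
apply: (part_disj hP H1an).
rewrite (_ : _ + _ = (1 + a / n.+1%:R) *+ n.+1).
  exact: (addr_closed_natmul (partD hP') n H2an1).
by rewrite -[RHS]mulr_natr mulrDl divfK ?pnatr_eq0 // mul1r mulrS; ring.
Qed.

Lemma crossingZ a (q : rat) : crossing a -> 0 < q -> crossing (ratr q * a).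
Proof.
move=> Sa /(ratr_pos_natdiv R) [m [n ->]].
by rewrite mulrAC mulr_natl; apply/crossing_divn/(addr_closed_natmul crossingD).
Qed.

Lemma crossingX a n : crossing a -> crossing (a ^+ n.+1).
Proof. exact: (mulr_closed_exp crossingM). Qed.

Lemma crossing0_addr_rat s1 s2 (q : rat) :
  s1 = 0 \/ crossing s1 -> s2 = 0 \/ crossing s2 -> 0 < q -> s1 + ratr q <> s2.
Proof.
move=> S1 S2 q_gt0 e; have rq_gt0 : 0 < ratr q :> R by rewrite ltr0q.
have s1_ge0 : 0 <= s1 by case: S1 => [->|[/(part_pos hP') [_ /ltW]]].
have H2s2 : H2 s2 by case: S2 => [s2_0|[]] //; move: e; rewrite s2_0; lra.
have H1s : H1 (s1 + ratr q).
  case: S1 => [->|S1]; first by rewrite add0r; exact: H1_rat.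
  have qV_gt0 : 0 < q^-1 by rewrite invr_gt0.
  have [_ H1s1q] := crossingZ S1 qV_gt0.
  rewrite (_ : _ + _ = ratr q * (1 + ratr q^-1 * s1)); first exact: (partZ HK hP H1s1q q_gt0).
  by rewrite fmorphV mulrDr mulr1 mulrA mulfV ?mul1r 1?addrC // lt0r_neq0.
by apply: (part_disj hP H1s); rewrite e.
Qed.

Lemma crossing_absurd h : crossing h -> False.
Proof.
move=> Sh; have [Kh h_gt0] := part_pos hP' Sh.1.
have [p [p_neq0 rp]] := Halg Kh.
have [q [q0_neq0]] := rat_root_coef0_neq0 (lt0r_neq0 h_gt0) p_neq0 rp.
have : (0 < size q)%N.
  by rewrite lt0n size_poly_eq0; apply: contraNneq q0_neq0 => ->; rewrite coef0.
rewrite /root horner_coef size_map_poly; case: (size q) => // n _.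
rewrite big_ord_recl /= coef_map expr0 mulr1.
under eq_bigr do rewrite coef_map.
have [s1 [s2 [S1 S2 ->]]] := rat_comb_split crossingD (fun c y c_gt0 Sy => crossingZ Sy c_gt0)
  (index_enum 'I_n) (fun i => q`_i.+1) (fun i => crossingX i Sh).
move=> /eqP e; case: (ltgtP q`_0 0) => [q0_lt0|q0_gt0|q0_0].
- apply: (crossing0_addr_rat S2 S1 (_ : 0 < - q`_0)); first by rewrite oppr_gt0.
  by rewrite rmorphN /=; lra.
- by apply: (crossing0_addr_rat S1 S2 q0_gt0); lra.
- by rewrite q0_0 eqxx in q0_neq0.
Qed.

Lemma modQ_H1_rat (a : rat) : modQ K H1 (ratr a).
Proof.
split; first exact: (subfield_rat HK a).
by exists (1 - a); rewrite rmorphB rmorph1 addrC subrK.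
Qed.

Lemma modQ_H1_opp h : H2 h -> modQ K H1 (- h).
Proof.
move=> H2h; have [Kh h_gt0] := part_pos hP' H2h.
have [c hc _] : exists2 c : rat, h < ratr c & ratr c < h + 1 by apply: rat_between; lra.
split; first exact: (subfieldN HK Kh).
by exists c; rewrite addrC; exact: (H1_rat_subr H2h hc).
Qed.

Section Translation.
Hypothesis H2_1addr_closed : forall h, H2 h -> H2 (1 + h).

Lemma H2_addr_rat h (q : rat) : H2 h -> 0 < q -> H2 (h + ratr q).
Proof.
move=> H2h q_gt0; have qV_gt0 : 0 < q^-1 by rewrite invr_gt0.
have rq_neq0 : ratr q != 0 :> R by rewrite lt0r_neq0 ?ltr0q.
rewrite (_ : _ + _ = ratr q * (1 + ratr q^-1 * h)); last by rewrite fmorphV; field.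
exact: (partZ HK hP' (H2_1addr_closed (partZ HK hP' H2h qV_gt0)) q_gt0).
Qed.

Lemma H2_translate w (c d : rat) : K w -> H2 (w + ratr c) -> 0 < w + ratr d -> H2 (w + ratr d).
Proof.
move=> Kw H2c d_pos; have [_ c_pos] := part_pos hP' H2c.
case: (ltgtP c d) => [cd|dc|<- //].
- rewrite (_ : w + _ = (w + ratr c) + ratr (d - c)); last by rewrite rmorphB /=; ring.
  by apply: H2_addr_rat; rewrite // subr_gt0.
- rewrite (_ : w + _ = (w + ratr c) - ratr (c - d)); last by rewrite rmorphB /=; ring.
  by apply: H2_subr_rat; rewrite ?subr_gt0 ?rmorphB //=; lra.
Qed.

Lemma modQ_disj w : modQ K H1 w -> modQ K H2 w -> False.
Proof.
move=> [Kw [c H1c]] [_ [d H2d]].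
exact: (part_disj hP H1c (H2_translate Kw H2d (part_pos hP H1c).2)).
Qed.

Lemma modQ_total w : K w -> modQ K H1 w \/ modQ K H2 w.
Proof.
move=> Kw; have [c c_gt _] : exists2 c : rat, - w < ratr c & ratr c < - w + 1.
  by apply: rat_between; lra.
have wc_gt0 : 0 < w + ratr c by lra.
have Kwc := subfieldD HK Kw (subfield_rat HK c).
by case: (part_classify hP Kwc wc_gt0) => ?; [left|right]; split=> //; exists c.
Qed.

Variable x : R.
Hypothesis H2x : H2 x.

(* Heuristically H2 consists of the f(x) with f'(x) > 0; [deriv_ge w d] and
   [deriv_le w d] then say that w, as a function of x, has derivative >= d, resp. <= d. *)
Definition deriv_ge (w d : R) := forall g : rat, ratr g < d -> modQ K H2 (w - ratr g * x).
Definition deriv_le (w d : R) := forall g : rat, d < ratr g -> modQ K H1 (w - ratr g * x).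

Lemma deriv_geD w1 w2 d1 d2 :
  deriv_ge w1 d1 -> deriv_ge w2 d2 -> deriv_ge (w1 + w2) (d1 + d2).
Proof.
move=> D1 D2 g g_lt.
have [g1 g1_gt g1_lt] : exists2 g1 : rat, ratr g - d2 < ratr g1 & ratr g1 < d1.
  by apply: rat_between; lra.
rewrite (_ : _ - _ = (w1 - ratr g1 * x) + (w2 - ratr (g - g1) * x)); last first.
  by rewrite rmorphB /=; ring.
by apply: (modQD HK hP' (D1 _ g1_lt) (D2 _ _)); rewrite rmorphB /=; lra.
Qed.

Lemma deriv_geZ w d (q : rat) : deriv_ge w d -> 0 < q -> deriv_ge (ratr q * w) (ratr q * d).
Proof.
move=> D q_gt0 g g_lt; have rq_gt0 : 0 < ratr q :> R by rewrite ltr0q.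
rewrite (_ : _ - _ = ratr q * (w - ratr (g / q) * x)); last first.
  by rewrite fmorph_div /=; field; rewrite lt0r_neq0.
by apply: (modQZ HK hP' (D _ _) q_gt0); rewrite fmorph_div /= ltr_pdivrMr // mulrC.
Qed.

Lemma deriv_ge_rat (a : rat) : deriv_ge (ratr a) 0.
Proof.
move=> g g_lt0; have mg_gt0 : 0 < - g by rewrite oppr_gt0 -(ltrq0 R).
rewrite (_ : _ - _ = ratr (- g) * x + ratr a); last by rewrite rmorphN /=; ring.
exact: (modQ_addr HK a (modQ_of hP' (partZ HK hP' H2x mg_gt0))).
Qed.

Lemma deriv_ge_mulx u a : H2 u -> 0 < a -> deriv_ge u a -> deriv_ge (u * x) (u + a * x).
Proof.
move=> H2u a_gt0 D g g_lt; have [_ x_gt0] := part_pos hP' H2x; have [_ u_gt0] := part_pos hP' H2u.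
have [c] : exists2 c : rat, Num.max 0 ((ratr g - u) / a) < ratr c & ratr c < x.
  by apply: rat_between; rewrite gt_max x_gt0 ltr_pdivrMr //=; lra.
rewrite gt_max ltr_pdivrMr // => /andP [c_gt0 c_gt] c_lt.
have [c'] : exists2 c' : rat, Num.max 0 (ratr g - ratr c * a) < ratr c' & ratr c' < u.
  by apply: rat_between; rewrite gt_max u_gt0 /=; lra.
rewrite gt_max => /andP [c'_gt0 c'_gt] c'_lt.
have cq_gt0 : 0 < c by rewrite -(ltr0q R).
have c'q_gt0 : 0 < c' by rewrite -(ltr0q R).
have H2prod := partM hP' (H2_subr_rat H2x cq_gt0 c_lt) (H2_subr_rat H2u c'q_gt0 c'_lt).
have Dg1 : modQ K H2 (u - ratr ((g - c') / c) * x).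
  by apply: D; rewrite fmorph_div rmorphB /= ltr_pdivrMr // mulrC; lra.
have := modQD HK hP' (modQ_addr HK (- (c * c')) (modQ_of hP' H2prod)) (modQZ HK hP' Dg1 cq_gt0).
congr modQ; rewrite rmorphN rmorphM fmorph_div rmorphB /=; field.
by rewrite lt0r_neq0.
Qed.

Lemma deriv_le_mulx u a : H2 u -> 0 < a -> deriv_le u a -> deriv_le (u * x) (u + a * x).
Proof.
move=> H2u a_gt0 D g g_gt; have [_ x_gt0] := part_pos hP' H2x.
have [c c_gt] : exists2 c : rat, x < ratr c & ratr c < (ratr g - u) / a.
  by apply: rat_between; rewrite ltr_pdivlMr //; lra.
rewrite ltr_pdivlMr // => c_lt.
have [c' c'_gt c'_lt] : exists2 c' : rat, u < ratr c' & ratr c' < ratr g - ratr c * a.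
  by apply: rat_between; lra.
have cq_gt0 : 0 < c by rewrite -(ltr0q R); lra.
have H1prod := partM hP (H1_rat_subr H2x c_gt) (H1_rat_subr H2u c'_gt).
have Dg1 : modQ K H1 (u - ratr ((g - c') / c) * x).
  by apply: D; rewrite fmorph_div rmorphB /= ltr_pdivlMr //; lra.
have := modQD HK hP (modQ_addr HK (- (c * c')) (modQ_of hP H1prod)) (modQZ HK hP Dg1 cq_gt0).
congr modQ; rewrite rmorphN rmorphM fmorph_div rmorphB /=; field.
by rewrite lt0r_neq0 // ltr0q.
Qed.

Lemma deriv_ge_pow k : deriv_ge (x ^+ k.+1) (x ^+ k *+ k.+1).
Proof.
have [_ x_gt0] := part_pos hP' H2x.
elim: k => [|k IH].
  move=> g; rewrite expr0 expr1 mulr1n => g_lt1.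
  rewrite (_ : _ - _ = ratr (1 - g) * x); last by rewrite rmorphB rmorph1 /=; ring.
  by apply/(modQ_of hP')/(partZ HK hP' H2x); rewrite subr_gt0 -(ltr_rat R) rmorph1.
rewrite [x ^+ k.+2]exprSr (_ : _ *+ k.+2 = x ^+ k.+1 + x ^+ k *+ k.+1 * x); last first.
  by rewrite mulrS mulrnAl -exprSr.
apply: deriv_ge_mulx IH; first exact: (mulr_closed_exp (partM hP') k H2x).
by rewrite pmulrn_lgt0 // exprn_gt0.
Qed.

Lemma deriv_le_pow k : deriv_le (x ^+ k.+1) (x ^+ k *+ k.+1).
Proof.
have [_ x_gt0] := part_pos hP' H2x.
elim: k => [|k IH].
  move=> g; rewrite expr0 expr1 mulr1n => g_gt1.
  rewrite (_ : _ - _ = - (ratr (g - 1) * x)); last by rewrite rmorphB rmorph1 /=; ring.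
  by apply/modQ_H1_opp/(partZ HK hP' H2x); rewrite subr_gt0 -(ltr_rat R) rmorph1.
rewrite [x ^+ k.+2]exprSr (_ : _ *+ k.+2 = x ^+ k.+1 + x ^+ k *+ k.+1 * x); last first.
  by rewrite mulrS mulrnAl -exprSr.
apply: deriv_le_mulx IH; first exact: (mulr_closed_exp (partM hP') k H2x).
by rewrite pmulrn_lgt0 // exprn_gt0.
Qed.

Lemma deriv_ge_opp w d : K w -> deriv_le w d -> deriv_ge (- w) (- d).
Proof.
move=> Kw D g g_lt; have [Kx _] := part_pos hP' H2x.
have := subfieldB HK (subfieldN HK Kw) (subfieldM HK (subfield_rat HK g) Kx).
case/modQ_total => // H1wg; exfalso.
have [g' g'_gt g'_lt] : exists2 g' : rat, d < ratr g' & ratr g' < - ratr g :> R.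
  by apply: rat_between; lra.
apply: (modQ_disj (modQD HK hP H1wg (D g' g'_gt))).
rewrite (_ : _ + _ = ratr (- (g + g')) * x); last by rewrite rmorphN rmorphD /=; ring.
by apply/(modQ_of hP')/(partZ HK hP' H2x); rewrite oppr_gt0 -(ltrq0 R) rmorphD /=; lra.
Qed.

Lemma deriv_ge_monomial (a : rat) k : deriv_ge (ratr a * x ^+ k) (ratr a * (x ^+ k.-1 *+ k)).
Proof.
have [Kx _] := part_pos hP' H2x.
case: k => [|k]; first by rewrite expr0 mulr1 mulr0n mulr0; exact: deriv_ge_rat.
case: (ltgtP a 0) => [a_lt0|a_gt0|->].
- have ma_gt0 : 0 < - a by rewrite oppr_gt0.
  have := deriv_geZ (deriv_ge_opp (subfieldX HK k.+1 Kx) (deriv_le_pow (k := k))) ma_gt0.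
  by rewrite rmorphN !mulrNN.
- exact: (deriv_geZ (deriv_ge_pow (k := k)) a_gt0).
- by have := deriv_ge_rat 0; rewrite rmorph0 !mul0r.
Qed.

Lemma deriv_ge_horner (p : {poly rat}) :
  deriv_ge (map_poly ratr p).[x] (map_poly ratr p^`()).[x].
Proof.
rewrite -[p]coefK poly_def !raddf_sum !horner_sum.
apply: (big_ind2 deriv_ge) => [|w1 d1 w2 d2|i _]; first by have := deriv_ge_rat 0; rewrite rmorph0.
  exact: deriv_geD.
rewrite /= derivZ derivXn !map_polyZ raddfMn /= !map_polyXn !hornerZ hornerMn !hornerXn.
exact: deriv_ge_monomial.
Qed.

Lemma deriv_ge0_le0 d : deriv_ge 0 d -> d <= 0.
Proof.
move=> D; rewrite leNgt; apply/negP => d_gt0.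
have := D 0; rewrite rmorph0 mul0r subr0 => /(_ d_gt0).
by apply: modQ_disj; have := modQ_H1_rat 0; rewrite rmorph0.
Qed.

Lemma H2_translation_absurd : False.
Proof.
have [Kx _] := part_pos hP' H2x.
have [p [p_neq0 rp]] := Halg Kx.
have [q [/rootP rq dq_neq0]] := rat_root_deriv_neq0 p_neq0 rp.
have Dq := deriv_ge_horner (p := q); have Dqn := deriv_ge_horner (p := - q).
rewrite rq in Dq; rewrite derivN !raddfN !hornerN rq oppr0 in Dqn.
have := deriv_ge0_le0 Dqn; rewrite oppr_le0 => dq_ge0.
by move: dq_neq0; rewrite eq_le (deriv_ge0_le0 Dq) dq_ge0.
Qed.

End Translation.

Lemma H2_empty : (exists x, H2 x) -> False.
Proof.
move=> [x H2x]; case: (classic (exists h, crossing h)) => [[h /crossing_absurd //]|no_crossing].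
apply: (H2_translation_absurd _ H2x) => h H2h.
by apply: NNPP => nH2; apply: no_crossing; exists h; split; last exact: (H1_1addr H2h nH2).
Qed.

End OneInH1.

Theorem corollary6p2 (R : realType) (K : R -> Prop)
  (HK : is_subfield K) (Halg : forall x, K x -> algebraic_over_Q x) :
  ~ exists H1 H2 : R -> Prop,
      (exists x, H1 x) /\ (exists x, H2 x) /\
      (forall x, H1 x -> H2 x -> False) /\
      (forall x, pos_part K x <-> (H1 x \/ H2 x)) /\
      semiring_closed_set H1 /\ semiring_closed_set H2.
Proof.
move=> [H1 [H2 [[x1 H1x1] [[x2 H2x2] [disj [cover [sc1 sc2]]]]]]].
have hP : semiring_partition K H1 H2 by split.
have [one_H1|one_H2] := part_classify hP (subfield1 HK) ltr01.
- exact: (H2_empty HK hP one_H1 Halg (ex_intro _ x2 H2x2)).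
- exact: (H2_empty HK (semiring_partition_sym hP) one_H2 Halg (ex_intro _ x1 H1x1)).
Qed.
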